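(* Let $F$ be a semi-flow on a connected metrizable space $X$ and let $\{S_\alpha\}$ be a collection of $F$-$\Omega$streams. Then: (1) $S_\cap=\bigcap_\alpha S_\alpha$ is an $F$-$\Omega$stream; (2) $\mathcal{R}_{S_\cap}=\bigcap_\alpha\mathcal{R}_{S_\alpha}$; (3) for every node $N$ of $S_\cap$, if $N_\alpha$ denotes the node of $S_\alpha$ containing $N$, then $N=\bigcap_\alpha N_\alpha$.
   Context: A semi-flow on $X$ is a continuous map $F:\mathbb{T}\times X\to X$, $(t,x)\mapsto F^t(x)$, where $\mathbb{T}=\{0,1,2,\dots\}$ or $[0,\infty)$, with $F^0=\mathrm{id}$ and $F^{t_1+t_2}=F^{t_2}\circ F^{t_1}$. Put $\mathcal{O}_F(x)=\{F^t(x)\}$ and $\mathcal{O}_F=\{(x,y):y\in\mathcal{O}_F(x)\}$. An $F$-stream is a reflexive, transitive relation $S$ that is closed in $X\times X$ and contains $\mathcal{O}_F$; write $x\succcurlyeq_S y$ for $(x,y)\in S$ and $\mathrm{Down}_S(x)=\{y:x\succcurlyeq_S y\}$. $S$ is an $\Omega$stream if $\mathrm{Down}_S(x)=\mathcal{O}_F(x)\cup\mathrm{Down}_S(y)$ for every $x$ and every $y\in\mathcal{O}_F(x)$. Write $x\overset{S}{=}y$ if $x\succcurlyeq_S y$ and $y\succcurlyeq_S x$. A point $x$ is $S$-recurrent if $\mathcal{O}_F(x)=\{x\}$ or there is $y\ne x$ with $x\overset{S}{=}y$, and $\mathcal{R}_S$ is the set of such points. The nodes of $S$ are the $\overset{S}{=}$-equivalence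 classes of $\mathcal{R}_S$. *)

From HB Require Import structures.
From mathcomp Require Import all_boot all_order all_algebra.
From mathcomp Require Import all_classical all_reals all_analysis.
Set Implicit Arguments. Unset Strict Implicit. Unset Printing Implicit Defensive.
Import Order.TTheory GRing.Theory Num.Theory.
Import numFieldTopology.Exports.
Local Open Scope classical_set_scope.
Local Open Scope ring_scope.

Section Flows.
Context {R : realType} {X : topologicalType}.

Definition timeset (disc : bool) : set R :=
  if disc then [set t | exists n : nat, t = n%:R] else [set t | 0 <= t].

Definition semiflow (disc : bool) (F : R -> X -> X) : Prop :=
  {within timeset disc `*` [set: X], continuous (fun p : R * X => F p.1 p.2)}
  /\ (forall x, F 0 x = x)
  /\ (forall t1 t2 x, timeset disc t1 -> timeset disc t2 ->
        F (t1 + t2) x = F t2 (F t1 x)).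

Definition orbit (disc : bool) (F : R -> X -> X) (x : X) : set X :=
  [set F t x | t in timeset disc].

Definition orbit_rel (disc : bool) (F : R -> X -> X) : set (X * X) :=
  [set p | orbit disc F p.1 p.2].

Definition Down (S : set (X * X)) (x : X) : set X := [set y | S (x, y)].

Definition is_stream (disc : bool) (F : R -> X -> X) (S : set (X * X)) : Prop :=
  (forall x, S (x, x))
  /\ (forall x y z, S (x, y) -> S (y, z) -> S (x, z))
  /\ closed S
  /\ orbit_rel disc F `<=` S.

Definition is_Omega_stream (disc : bool) (F : R -> X -> X) (S : set (X * X)) : Prop :=
  is_stream disc F S /\
  (forall x y, orbit disc F x y -> Down S x = orbit disc F x `|` Down S y).

Definition Seq (S : set (X * X)) (x y : X) : Prop := S (x, y) /\ S (y, x).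

Definition recurrent (disc : bool) (F : R -> X -> X) (S : set (X * X)) : set X :=
  [set x | orbit disc F x = [set x] \/ exists y, y <> x /\ Seq S x y].

Definition is_node (disc : bool) (F : R -> X -> X) (S : set (X * X)) (N : set X) : Prop :=
  exists x, recurrent disc F S x /\
    N = [set y | recurrent disc F S y /\ Seq S x y].

End Flows.

(* In an Omega-stream S, each y in O_F(x) gives Down_S(x) = O_F(x) ∪ Down_S(y).
   Applying this twice shows that a recurrent point x that is not fixed is
   S-equivalent to every point of its orbit: the point S-equivalent to x either
   lies below F^t(x), or is some F^s(x) from which x is reached again, making
   the orbit periodic.  So recurrence of a non-fixed point is witnessed by any
   F^t(x) <> x, independently of S, and recurrence and nodes commute with
   intersections. *)
From Pilot Require Import Defs.
From HB Require Import structures.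
From mathcomp Require Import all_boot all_order all_algebra.
From mathcomp Require Import all_classical all_reals all_analysis.
From mathcomp Require Import lra.
Set Implicit Arguments. Unset Strict Implicit. Unset Printing Implicit Defensive.
Import Order.TTheory GRing.Theory Num.Theory.
Import numFieldTopology.Exports.
Local Open Scope classical_set_scope.
Local Open Scope ring_scope.

Section TimeSet.
Variables (R : realType) (disc : bool).

Lemma timeset0 : timeset disc (0 : R).
Proof. by rewrite /timeset; case: disc => //=; exists 0%N. Qed.

Lemma timeset_ge0 (u : R) : timeset disc u -> 0 <= u.
Proof. by rewrite /timeset; case: disc => //= -[n ->]. Qed.

Lemma timesetD (u v : R) :
  timeset disc u -> timeset disc v -> timeset disc (u + v).
Proof.
rewrite /timeset; case: disc => /= [[n ->] [m ->]|]; last exact: addr_ge0.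
by exists (n + m)%N; rewrite natrD.
Qed.

Lemma timesetB (u v : R) :
  timeset disc u -> timeset disc v -> u <= v -> timeset disc (v - u).
Proof.
rewrite /timeset; case: disc => /= [[n ->] [m ->]|_ _]; last by rewrite subr_ge0.
by rewrite ler_nat => lenm; exists (m - n)%N; rewrite natrB.
Qed.

End TimeSet.

Section Streams.
Variables (R : realType) (X : topologicalType) (disc : bool) (F : R -> X -> X).

Section Stream.
Variables (S : set (X * X)) (hS : is_stream disc F S).

Lemma stream_refl x : S (x, x).
Proof. exact: hS.1. Qed.

Lemma stream_trans x y z : S (x, y) -> S (y, z) -> S (x, z).
Proof. exact: hS.2.1. Qed.

Lemma stream_orbit x y : Defs.orbit disc F x y -> S (x, y).
Proof. by move=> xy; apply: hS.2.2.2. Qed.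

Lemma node_class N x : is_node disc F S N -> N x ->
  N = [set y | recurrent disc F S y /\ Seq S x y].
Proof.
move=> [z [_ ->]] [_ [zx xz]]; apply/seteqP; split=> y [ry [uy yu]].
  by split=> //; split; [exact: (stream_trans xz uy)|exact: (stream_trans yu zx)].
by split=> //; split; [exact: (stream_trans zx uy)|exact: (stream_trans yu xz)].
Qed.

End Stream.

Hypothesis hF : semiflow disc F.

Lemma semiflow0 x : F 0 x = x.
Proof. exact: hF.2.1. Qed.

Lemma semiflowD t1 t2 x : timeset disc t1 -> timeset disc t2 ->
  F (t1 + t2) x = F t2 (F t1 x).
Proof. exact: hF.2.2. Qed.

Lemma orbit_moves x : Defs.orbit disc F x <> [set x] ->
  exists2 t, timeset disc t & F t x <> x.
Proof.
move=> nfix; apply: contra_notP nfix => fixed; apply/seteqP; split=> [y [t tt <-]|y ->].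
  by apply: contra_notP fixed => Ftx; exists t.
by exists 0; [exact: timeset0|exact: semiflow0].
Qed.

Section OmegaStream.
Variables (S : set (X * X)) (hS : is_Omega_stream disc F S).

Let hS1 : is_stream disc F S := hS.1.

Lemma Omega_stream_split x y z : Defs.orbit disc F x y -> S (x, z) ->
  Defs.orbit disc F x z \/ S (y, z).
Proof. by move=> xy xz; have : Down S x z by []; rewrite (hS.2 x y xy). Qed.

Lemma stream_orbit_le x u v : timeset disc u -> timeset disc v -> u <= v ->
  S (F u x, F v x).
Proof.
move=> tu tv uv; have tvu := timesetB tu tv uv.
by apply: (stream_orbit hS1); exists (v - u); rewrite // -semiflowD // addrC subrK.
Qed.

Lemma periodic_stream_return x p : timeset disc p -> 0 < p -> F p x = x ->
  forall u, timeset disc u -> S (F u x, x).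
Proof.
move=> tp p_gt0 Fpx.
suff below k u : timeset disc u -> u <= k%:R * p -> S (F u x, x).
  move=> u tu; apply: (below (Num.Def.archi_bound (u / p))) => //.
  have := archi_boundP (divr_ge0 (timeset_ge0 tu) (ltW p_gt0)).
  by rewrite ltr_pdivrMr // => /ltW.
elim: k u => [|k IHk] u tu.
  rewrite mul0r => u_le0.
  have -> : u = 0 by apply/eqP; rewrite eq_le u_le0 (timeset_ge0 tu).
  by rewrite semiflow0; exact: stream_refl.
case: (leP u p) => [up|pu]; first by have := stream_orbit_le x tu tp up; rewrite Fpx.
have tup : timeset disc (u - p) by apply: timesetB => //; exact: ltW.
rewrite -natr1 mulrDl mul1r -lerBlDr => upk.
by rewrite -(subrK p u) addrC semiflowD // Fpx; exact: IHk.
Qed.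

Lemma recurrent_orbit_return x : recurrent disc F S x ->
  Defs.orbit disc F x <> [set x] ->
  forall t, timeset disc t -> S (F t x, x).
Proof.
case=> [//|[y [yx [xy yx']]]] _ t tt.
have [[s ts Fsx]|] := Omega_stream_split (ex_intro2 _ _ t tt erefl) xy; last first.
  by move=> Ftxy; exact: (stream_trans hS1 Ftxy yx').
subst y; case: (leP t s) => [ts_le|st].
  exact: (stream_trans hS1 (stream_orbit_le x tt ts ts_le) yx').
have tts : timeset disc (t - s) by apply: timesetB => //; exact: ltW.
have sFt : Defs.orbit disc F (F s x) (F t x).
  by exists (t - s); rewrite // -semiflowD // addrC subrK.
have [[r tr Fsrx]|//] := Omega_stream_split sFt yx'.
have s_gt0 : 0 < s.
  rewrite lt_neqAle (timeset_ge0 ts) andbT.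
  by apply: contra_notN yx => /eqP <-; rewrite semiflow0.
apply: (periodic_stream_return (timesetD ts tr)) => //; last by rewrite semiflowD.
by have := timeset_ge0 tr; lra.
Qed.

Lemma recurrent_Seq_orbit x t : recurrent disc F S x ->
  Defs.orbit disc F x <> [set x] -> timeset disc t -> Seq S x (F t x).
Proof.
move=> rx nfix tt; split; first by apply: (stream_orbit hS1); exists t.
exact: recurrent_orbit_return.
Qed.

End OmegaStream.

Section Intersection.
Variables (T : Type) (S : T -> set (X * X)).

Local Notation Scap := (\bigcap_(a in [set: T]) S a).

Lemma Seq_bigcap x y : Seq Scap x y <-> forall a, Seq (S a) x y.
Proof.
split=> [[xy yx] a|Sxy]; first by split; [exact: xy|exact: yx].
by split=> a _; have [] := Sxy a.
Qed.

Hypothesis hS : forall a, is_Omega_stream disc F (S a).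

Lemma bigcap_Omega_stream : is_Omega_stream disc F Scap.
Proof.
have hS1 a := (hS a).1.
split; first split.
- by move=> x a _; exact: stream_refl.
- split; first by move=> x y z xy yz a _; exact: (stream_trans (hS1 a) (xy a I) (yz a I)).
  split; first by apply: closed_bigI => a _; exact: (hS1 a).2.2.1.
  by move=> [x y] xy a _; exact: (stream_orbit (hS1 a)).
move=> x y xy; apply/seteqP; split=> z /=.
  move=> xz; have [|nxz] := pselect (Defs.orbit disc F x z); [by left|right].
  by move=> a _; have [] := Omega_stream_split (hS a) xy (xz a I).
case=> [xz|yz] a _; rewrite -[S a _]/(Down (S a) x z) ((hS a).2 x y xy); first by left.
by right; exact: yz.
Qed.

Lemma recurrent_bigcap :
  recurrent disc F Scap = \bigcap_(a in [set: T]) recurrent disc F (S a).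
Proof.
apply/seteqP; split=> x /=.
  case=> [fixed|[y [yx xy]]] a _; [by left|right].
  by exists y; split=> //; exact: (Seq_bigcap x y).1.
move=> rx; have [|nfix] := pselect (Defs.orbit disc F x = [set x]); [by left|right].
have [t tt Ftx] := orbit_moves nfix.
exists (F t x); split=> //; apply/Seq_bigcap => a.
exact: (recurrent_Seq_orbit (hS a) (rx a I) nfix tt).
Qed.

Lemma node_bigcap N (Na : T -> set X) : is_node disc F Scap N ->
  (forall a, is_node disc F (S a) (Na a) /\ N `<=` Na a) ->
  N = \bigcap_(a in [set: T]) Na a.
Proof.
move=> [x [rx ->]] hNa.
have Nx : [set y | recurrent disc F Scap y /\ Seq Scap x y] x.
  by split=> //; split; exact: (bigcap_Omega_stream.1).1.
have {}hNa a : Na a = [set y | recurrent disc F (S a) y /\ Seq (S a) x y].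
  by have [Nna sub] := hNa a; exact: (node_class (hS a).1 Nna (sub x Nx)).
rewrite recurrent_bigcap; apply/seteqP; split=> y /=.
  by move=> [ry /Seq_bigcap xy] a _; rewrite hNa; split; [exact: ry|exact: xy].
move=> Nay; have {}Nay a : recurrent disc F (S a) y /\ Seq (S a) x y.
  by have := Nay a I; rewrite hNa.
by split; [move=> a _; exact: (Nay a).1|apply/Seq_bigcap => a; exact: (Nay a).2].
Qed.

End Intersection.

End Streams.

Theorem proposition27 (R : realType) (X : metricType R) (disc : bool)
  (F : R -> X -> X) (I : Type) (S : I -> set (X * X)) :
  connected [set: X] ->
  semiflow disc F ->
  (forall a, is_Omega_stream disc F (S a)) ->
  let Scap := \bigcap_(a in [set: I]) S a in
  [/\ is_Omega_stream disc F Scap,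
      recurrent disc F Scap = \bigcap_(a in [set: I]) recurrent disc F (S a)
    & forall N : set X, is_node disc F Scap N ->
      forall Na : I -> set X,
        (forall a, is_node disc F (S a) (Na a) /\ N `<=` Na a) ->
        N = \bigcap_(a in [set: I]) Na a].
Proof.
move=> _ hF hS Scap; split.
- exact: bigcap_Omega_stream.
- exact: (recurrent_bigcap hF hS).
- by move=> N nodeN Na hNa; exact: (node_bigcap hF hS nodeN hNa).
Qed.
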